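(* For an integer $d\geqslant 0$ and a real $x>0$, let $K_d(x)$ be the largest integer $k$ such that $(k-d)k\leqslant dx$; equivalently $K_d(x)=\lfloor (d+\sqrt{d^2+4dx})/2\rfloor$. Then for integers $d$ and reals $x$ with $0\leqslant d\leqslant x$ and $x\geqslant 1$, $$\sum_{K_{d}(x)<k\leqslant K_{d+1}(x)}k^2=\frac{(d+1)\sqrt{d+1}-d\sqrt{d}}{3}\,x^{3/2}+O\bigl((d+1)x\bigr),$$ the sum being over integers $k$, with an absolute implied constant.
   Context: $\lfloor t\rfloor$ denotes the integer part of the real number $t$. *)

From mathcomp Require Import all_boot all_order all_algebra.
From mathcomp Require Import all_reals.
Set Implicit Arguments. Unset Strict Implicit. Unset Printing Implicit Defensive.
Import Order.TTheory GRing.Theory Num.Theory.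
Local Open Scope ring_scope.

Definition Kd {R : realType} (d : nat) (x : R) : int :=
  Num.floor ((d%:R + Num.sqrt (d%:R ^+ 2 + 4 * d%:R * x)) / 2).

(* sum of k^2 over integers k with K_d(x) < k <= K_{d+1}(x).
   Since K_d(x) >= 0, such k are natural numbers in [0, K_{d+1}(x)]. *)
Definition Ssum {R : realType} (d : nat) (x : R) : R :=
  \sum_(0 <= k < `|Kd d.+1 x|%N.+1 | (Kd d x < k%:Z)%R) (k%:R) ^+ 2.

(* Write [a_d = (d + T_d) / 2] with [T_d = sqrt (d^2 + 4 d x)], so that [K_d(x)] is the floor
   of [a_d].  As [sum_(k <= N) k^2 = N (N + 1) (2 N + 1) / 6], the sum equals
   [(a_(d+1)^3 - a_d^3) / 3] up to [O(a_(d+1)^2) = O((d + 1) x)].  Expanding the cube with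
   [T_d^2 = d^2 + 4 d x] gives [a_d^3 = (d x)^(3/2) + (d^3 + 3 d^2 x + F_d) / 2], where
   [F_d = d^2 T_d + d x (T_d - 2 sqrt (d x))].  [F_d] itself is not [O((d + 1) x)], but its
   increment is: [T_d - 2 sqrt (d x) = d^2 / (T_d + 2 sqrt (d x))] lies in [[0, d]] and moves
   by at most 2 when [d] increases by 1, and [(d + 1)^2 T_(d+1) - d^2 T_d] is [O((d + 1) x)]
   as long as [d <= x]. *)

From mathcomp Require Import all_boot all_order all_algebra.
From mathcomp Require Import all_reals.
From mathcomp Require Import ring lra.
Set Implicit Arguments. Unset Strict Implicit. Unset Printing Implicit Defensive.
Import Order.TTheory GRing.Theory Num.Theory.
Local Open Scope ring_scope.

Definition sqsum {R : numFieldType} (N : R) : R := N * (N + 1) * (2 * N + 1) / 6.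

Lemma sum_sqr_nat (R : numFieldType) (N : nat) :
  \sum_(0 <= k < N.+1) (k%:R : R) ^+ 2 = sqsum N%:R.
Proof.
elim: N => [|N IHN]; first by rewrite big_nat1 /sqsum; field.
by rewrite big_nat_recr //= IHN /sqsum; field.
Qed.

Lemma sum_sqr_between (R : numFieldType) (a b : nat) : (a <= b)%N ->
  \sum_(0 <= k < b.+1 | (a%:Z < k%:Z)%R) (k%:R : R) ^+ 2 = sqsum b%:R - sqsum a%:R.
Proof.
move=> le_ab; rewrite -!sum_sqr_nat !(@big_cat_nat _ _ _ a.+1 0 b.+1) //=.
rewrite addrAC subrr add0r [X in X + _]big_nat_cond big_pred0 ?add0r => [|k].
  rewrite big_nat_cond [RHS]big_nat_cond; apply: eq_bigl => k.
  by rewrite ?ltz_nat andbT andbAC andbb.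
by rewrite ?ltz_nat ltnS; case: leqP; rewrite ?andbF ?andbT.
Qed.

Lemma cube_increment_bound (R : realFieldType) (a t : R) :
  0 <= a -> a <= t -> t <= a + 1 -> 0 <= t ^+ 3 - a ^+ 3 <= 3 * t ^+ 2.
Proof.
move=> a_ge0 le_at le_ta1.
have -> : t ^+ 3 - a ^+ 3 = (t - a) * (t ^+ 2 + t * a + a ^+ 2) by ring.
have sum_ge0 : 0 <= t ^+ 2 + t * a + a ^+ 2 by nra.
have sum_le : t ^+ 2 + t * a + a ^+ 2 <= 3 * t ^+ 2 by nra.
apply/andP; split; first by apply: mulr_ge0; lra.
by rewrite -[X in _ <= X]mul1r; apply: ler_pM; lra.
Qed.

Lemma sqsum_truncn_sub (R : archiRealFieldType) (s t : R) : 0 <= s -> s <= t -> 1 <= t ->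
  `|(sqsum (Num.truncn t)%:R - sqsum (Num.truncn s)%:R) - (t ^+ 3 - s ^+ 3) / 3|
    <= 2 * t ^+ 2.
Proof.
move=> s_ge0 le_st t_ge1; have t_ge0 := le_trans s_ge0 le_st.
set a : R := (Num.truncn s)%:R; set b : R := (Num.truncn t)%:R.
have /andP[le_as lt_sa] : a <= s < a + 1 by rewrite natr1 truncn_itv.
have /andP[le_bt lt_tb] : b <= t < b + 1 by rewrite natr1 truncn_itv.
have le_ab : a <= b by rewrite ler_nat le_truncn.
have a_ge0 : 0 <= a by rewrite ler0n.
have /andP[gap_s0 gap_s] := cube_increment_bound a_ge0 le_as (ltW lt_sa).
have /andP[gap_t0 gap_t] := cube_increment_bound (le_trans a_ge0 le_ab) le_bt (ltW lt_tb).
have -> : sqsum b - sqsum a - (t ^+ 3 - s ^+ 3) / 3 =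
    (s ^+ 3 - a ^+ 3) / 3 - (t ^+ 3 - b ^+ 3) / 3 + ((b ^+ 2 - a ^+ 2) / 2 + (b - a) / 6).
  by rewrite /sqsum; field.
have low_ge0 : 0 <= (b ^+ 2 - a ^+ 2) / 2 + (b - a) / 6 by nra.
have low_le : (b ^+ 2 - a ^+ 2) / 2 + (b - a) / 6 <= t ^+ 2 by nra.
have sq_st : s ^+ 2 <= t ^+ 2 by nra.
rewrite ler_norml; apply/andP; split; lra.
Qed.

Definition kroot {R : rcfType} (d x : R) : R := (d + Num.sqrt (d ^+ 2 + 4 * d * x)) / 2.

Lemma kroot_sqr (R : rcfType) (d x : R) : 0 <= d ^+ 2 + 4 * d * x ->
  kroot d x ^+ 2 = d * kroot d x + d * x.
Proof.
move=> disc_ge0; have s_sqr := sqr_sqrtr disc_ge0.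
rewrite /kroot; set s := Num.sqrt _ in s_sqr *.
transitivity (d * ((d + s) / 2) + (s ^+ 2 - d ^+ 2) / 4); first by field.
by rewrite s_sqr; field.
Qed.

Section KrootIncrements.
Variables (R : rcfType) (x : R).
Hypothesis x_ge1 : 1 <= x.
(* [lra] and [nra] do not use section hypotheses; they are passed to them explicitly. *)

Let T (n : R) := Num.sqrt (n ^+ 2 + 4 * n * x).
Let Q (n : R) := 2 * (Num.sqrt n * Num.sqrt x).
Let D (n : R) := T n - Q n.
Let F (n : R) := n ^+ 2 * T n + n * x * D n.

Let x_ge0 : 0 <= x. Proof. exact: le_trans ler01 x_ge1. Qed.

Let T_ge0 (n : R) : 0 <= T n. Proof. exact: sqrtr_ge0. Qed.

Let Q_ge0 (n : R) : 0 <= Q n.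
Proof. by rewrite /Q mulr_ge0 ?mulr_ge0 ?sqrtr_ge0. Qed.

Let T_sqr (n : R) : 0 <= n -> T n ^+ 2 = n ^+ 2 + 4 * n * x.
Proof. by move=> n_ge0; rewrite sqr_sqrtr //; have := x_ge0; nra. Qed.

Let Q_sqr (n : R) : 0 <= n -> Q n ^+ 2 = 4 * n * x.
Proof. by move=> n_ge0; rewrite /Q !exprMn !sqr_sqrtr //; ring. Qed.

Let Q_le_T (n : R) : 0 <= n -> Q n <= T n.
Proof. by move=> n_ge0; have := T_sqr n_ge0; have := Q_sqr n_ge0; have := T_ge0 n; nra. Qed.

Let le_T (n : R) : 0 <= n -> n <= T n.
Proof. by move=> n_ge0; have := T_sqr n_ge0; have := T_ge0 n; have := x_ge0; nra. Qed.

Let D_ge0 (n : R) : 0 <= n -> 0 <= D n.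
Proof. by move=> n_ge0; rewrite subr_ge0 Q_le_T. Qed.

Let D_le (n : R) : 0 <= n -> D n <= n.
Proof.
move=> n_ge0; rewrite lerBlDl.
have := T_sqr n_ge0; have := Q_sqr n_ge0; have := T_ge0 n; have := Q_ge0 n; nra.
Qed.

(* [D n = n ^ 2 / (T n + Q n)]: the increments [(2 n + 1 + 4 x) / (T (n + 1) + T n)] of [T]
   and [4 x / (Q (n + 1) + Q n)] of [Q] nearly cancel. *)
Lemma D_succ_sub (n : R) : 0 <= n -> `|D (n + 1) - D n| <= 2.
Proof.
move=> n_ge0; have m_ge0 : 0 <= n + 1 by lra.
have := T_sqr n_ge0; have := T_sqr m_ge0; have := Q_sqr n_ge0; have := Q_sqr m_ge0.
have := le_T n_ge0; have := le_T m_ge0; have := Q_le_T n_ge0; have := Q_le_T m_ge0.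
have := Q_ge0 n; have := Q_ge0 (n + 1); have := D_le n_ge0; have := D_le m_ge0.
rewrite /D; set Tm := T (n + 1); set Tn := T n; set Qm := Q (n + 1); set Qn := Q n.
move=> Dm_le Dn_le Qm_ge0 Qn_ge0 Qm_le Qn_le le_Tm le_Tn Qm_sqr Qn_sqr Tm_sqr Tn_sqr.
set A := Tm + Tn; set B := Qm + Qn.
have eT : (Tm - Tn) * A = 2 * n + 1 + 4 * x by rewrite /A; nra.
have eQ : (Qm - Qn) * B = 4 * x by rewrite /B; nra.
have le_QnQm : Qn <= Qm by have := x_ge0; nra.
have le_BA : B <= A by rewrite /A /B; lra.
have A_gt0 : 0 < A by rewrite /A; lra.
have Qm_gt0 : 0 < Qm by have := x_ge1; nra.
have B_gt0 : 0 < B by rewrite /B; lra.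
have upper : (Tm - Tn) - (Qm - Qn) <= 1.
  suff : ((Tm - Tn) - (Qm - Qn)) * A <= 1 * A by rewrite ler_pM2r.
  have : (Qm - Qn) * B <= (Qm - Qn) * A by apply: ler_wpM2l; lra.
  rewrite /A; lra.
have lower : (Qm - Qn) - (Tm - Tn) <= 2.
  suff : ((Qm - Qn) - (Tm - Tn)) * (A * B) <= 2 * (A * B) by rewrite ler_pM2r ?mulr_gt0.
  have : Qm ^+ 2 <= A * B by rewrite /A /B; nra.
  have : 4 * x * B <= (Tm - Tn) * A * B by rewrite eT; have := x_ge0; nra.
  have : A - B <= 2 * n + 1 by rewrite /A /B; lra.
  have := x_ge0; nra.
by rewrite ler_norml; apply/andP; split; lra.
Qed.

Let T_succ_le (n : R) : 0 <= n -> n <= x -> T (n + 1) <= 4 * x.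
Proof.
move=> n_ge0 le_nx; have m_ge0 : 0 <= n + 1 by lra.
by have := T_sqr m_ge0; have := T_ge0 (n + 1); have := x_ge1; nra.
Qed.

Lemma sqr_mul_T_succ_sub (n : R) : 0 <= n -> n <= x ->
  0 <= (n + 1) ^+ 2 * T (n + 1) - n ^+ 2 * T n <= 12 * ((n + 1) * x).
Proof.
move=> n_ge0 le_nx; have m_ge0 : 0 <= n + 1 by lra.
have := T_sqr n_ge0; have := T_sqr m_ge0; have := le_T n_ge0; have := le_T m_ge0.
have := T_succ_le n_ge0 le_nx.
set Tm := T (n + 1); set Tn := T n => Tm_le le_Tm le_Tn Tm_sqr Tn_sqr.
have x_ge1' := x_ge1.
have eT : (Tm - Tn) * (Tm + Tn) = 2 * n + 1 + 4 * x by nra.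
have le_TnTm : Tn <= Tm by nra.
have n_TmTn : n * (Tm - Tn) <= 7 / 2 * x by nra.
have -> : (n + 1) ^+ 2 * Tm - n ^+ 2 * Tn = (2 * n + 1) * Tm + n * (n * (Tm - Tn)) by ring.
apply/andP; split; first by nra.
have : n * (n * (Tm - Tn)) <= n * (7 / 2 * x) by apply: ler_wpM2l.
have : (2 * n + 1) * Tm <= (2 * n + 1) * (4 * x) by apply: ler_wpM2l; lra.
nra.
Qed.

Lemma F_succ_sub (n : R) : 0 <= n -> n <= x -> `|F (n + 1) - F n| <= 15 * ((n + 1) * x).
Proof.
move=> n_ge0 le_nx; have m_ge0 : 0 <= n + 1 by lra.
have /andP[sqrT_ge0 sqrT_le] := sqr_mul_T_succ_sub n_ge0 le_nx.
have := D_succ_sub n_ge0; have := D_ge0 m_ge0; have := D_le m_ge0.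
set Dm := D (n + 1); set Dn := D n => Dm_le Dm_ge0 D_sub.
have mulD_sub : `|(n + 1) * Dm - n * Dn| <= 3 * (n + 1).
  have -> : (n + 1) * Dm - n * Dn = Dm + n * (Dm - Dn) by ring.
  apply: le_trans (ler_normD _ _) _; rewrite normrM (ger0_norm Dm_ge0) (ger0_norm n_ge0).
  have : n * `|Dm - Dn| <= n * 2 by apply: ler_wpM2l.
  lra.
have -> : F (n + 1) - F n =
    ((n + 1) ^+ 2 * T (n + 1) - n ^+ 2 * T n) + x * ((n + 1) * Dm - n * Dn).
  by rewrite /F -/Dm -/Dn; ring.
apply: le_trans (ler_normD _ _) _; rewrite normrM (ger0_norm sqrT_ge0) (ger0_norm x_ge0).
have : x * `|(n + 1) * Dm - n * Dn| <= x * (3 * (n + 1)) by apply: ler_wpM2l.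
lra.
Qed.

Lemma kroot_cubeE (n : R) : 0 <= n ->
  kroot n x ^+ 3 = n * Num.sqrt n * (x * Num.sqrt x) + (n ^+ 3 + 3 * n ^+ 2 * x + F n) / 2.
Proof.
move=> n_ge0; have Tn_sqr := T_sqr n_ge0.
rewrite /kroot -/(T n) /F /D /Q.
transitivity ((n ^+ 3 + 3 * n ^+ 2 * T n + (3 * n + T n) * T n ^+ 2) / 8); first by field.
by rewrite Tn_sqr; field.
Qed.

Lemma kroot_cube_succ_sub (n : R) : 0 <= n -> n <= x ->
  `|kroot (n + 1) x ^+ 3 - kroot n x ^+ 3
      - ((n + 1) * Num.sqrt (n + 1) - n * Num.sqrt n) * (x * Num.sqrt x)|
    <= 14 * ((n + 1) * x).
Proof.
move=> n_ge0 le_nx; have m_ge0 : 0 <= n + 1 by lra.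
rewrite !kroot_cubeE //.
set P := (n + 1) ^+ 3 - n ^+ 3 + 3 * ((n + 1) ^+ 2 - n ^+ 2) * x.
set sm := Num.sqrt (n + 1); set sn := Num.sqrt n; set sx := Num.sqrt x.
have -> : (n + 1) * sm * (x * sx) + ((n + 1) ^+ 3 + 3 * (n + 1) ^+ 2 * x + F (n + 1)) / 2
    - (n * sn * (x * sx) + (n ^+ 3 + 3 * n ^+ 2 * x + F n) / 2)
    - ((n + 1) * sm - n * sn) * (x * sx) = P / 2 + (F (n + 1) - F n) / 2.
  by rewrite /P; field.
have P_ge0 : 0 <= P by rewrite /P; have := x_ge0; nra.
have P_le : P <= 12 * ((n + 1) * x) by rewrite /P; have := x_ge1; nra.
have half_ge0 : 0 <= 2^-1 :> R by rewrite invr_ge0 ler0n.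
apply: le_trans (ler_normD _ _) _; rewrite !normrM (ger0_norm P_ge0) (ger0_norm half_ge0).
have := F_succ_sub n_ge0 le_nx; lra.
Qed.

Lemma kroot_succ_ge1 (n : R) : 0 <= n -> 1 <= kroot (n + 1) x.
Proof.
move=> n_ge0; have := @le_T (n + 1) (addr_ge0 n_ge0 ler01).
by rewrite /kroot -/(T _); lra.
Qed.

Lemma kroot_succ_sqr_le (n : R) : 0 <= n -> n <= x ->
  kroot (n + 1) x ^+ 2 <= 4 * ((n + 1) * x).
Proof.
move=> n_ge0 le_nx; have m_ge0 : 0 <= n + 1 by lra.
rewrite kroot_sqr; last by have := x_ge0; nra.
have : kroot (n + 1) x <= 3 * x.
  by have := T_succ_le n_ge0 le_nx; have := x_ge1; rewrite /kroot -/(T _); lra.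
by have := x_ge0; nra.
Qed.

End KrootIncrements.

Lemma kroot_ge0 (R : rcfType) (d x : R) : 0 <= d -> 0 <= x -> 0 <= kroot d x.
Proof. by move=> d_ge0 x_ge0; have := sqrtr_ge0 (d ^+ 2 + 4 * d * x); rewrite /kroot; lra. Qed.

Lemma kroot_le_succ (R : rcfType) (d x : R) : 0 <= d -> 0 <= x ->
  kroot d x <= kroot (d + 1) x.
Proof.
move=> d_ge0 x_ge0; rewrite /kroot ler_pM2r ?invr_gt0 ?ltr0n // lerD ?lerDl ?ler01 //.
by apply: ler_wsqrtr; nra.
Qed.

Lemma sqsum_truncn_kroot_sub (R : archiRcfType) (n x : R) : 0 <= n -> n <= x -> 1 <= x ->
  `|sqsum (Num.truncn (kroot (n + 1) x))%:R - sqsum (Num.truncn (kroot n x))%:R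
      - ((n + 1) * Num.sqrt (n + 1) - n * Num.sqrt n) / 3 * (x * Num.sqrt x)|
    <= 13 * ((n + 1) * x).
Proof.
move=> n_ge0 le_nx x_ge1; have x_ge0 : 0 <= x by lra.
set s := kroot n x; set t := kroot (n + 1) x.
have floor_err := sqsum_truncn_sub (kroot_ge0 n_ge0 x_ge0) (kroot_le_succ n_ge0 x_ge0)
  (kroot_succ_ge1 x_ge1 n_ge0).
have cube_err := kroot_cube_succ_sub x_ge1 n_ge0 le_nx.
have t_sqr_le := kroot_succ_sqr_le x_ge1 n_ge0 le_nx.
rewrite -/s -/t in floor_err cube_err t_sqr_le.
set main := (_ - _) * (x * _) in cube_err; set S := _ - sqsum _ in floor_err *.
have -> : S - ((n + 1) * Num.sqrt (n + 1) - n * Num.sqrt n) / 3 * (x * Num.sqrt x)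
    = (S - (t ^+ 3 - s ^+ 3) / 3) + (t ^+ 3 - s ^+ 3 - main) / 3.
  by rewrite /main; field.
apply: le_trans (ler_normD _ _) _; rewrite normrM (@ger0_norm _ 3^-1) ?invr_ge0 ?ler0n //.
have : 0 <= (n + 1) * x by rewrite mulr_ge0 ?addr_ge0.
lra.
Qed.

Lemma Kd_truncn (R : realType) (d : nat) (x : R) : 0 <= x ->
  Kd d x = (Num.truncn (kroot d%:R x))%:Z.
Proof.
move=> x_ge0; have kroot_ge0 := kroot_ge0 (ler0n R d) x_ge0.
by rewrite truncn_floor kroot_ge0 gez0_abs // floor_ge0.
Qed.

Lemma Ssum_sqsum (R : realType) (d : nat) (x : R) : 0 <= x ->
  Ssum d x = sqsum (Num.truncn (kroot d.+1%:R x))%:R - sqsum (Num.truncn (kroot d%:R x))%:R.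
Proof.
move=> x_ge0; rewrite /Ssum !Kd_truncn // absz_nat sum_sqr_between // le_truncn // -natr1.
exact: kroot_le_succ.
Qed.

Theorem proposition3 (R : realType) :
  exists C : R, 0 < C /\
    forall (d : nat) (x : R), 1 <= x -> d%:R <= x ->
      `| Ssum d x
         - ((d.+1)%:R * Num.sqrt (d.+1)%:R - d%:R * Num.sqrt d%:R) / 3
             * (x * Num.sqrt x) |
      <= C * ((d.+1)%:R * x).
Proof.
exists 13; split=> // d x x_ge1 le_dx.
have succE : (d.+1)%:R = d%:R + 1 :> R by rewrite natr1.
rewrite Ssum_sqsum; last by lra.
by rewrite succE sqsum_truncn_kroot_sub.
Qed.
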